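(* Let $\lambda,\mu$ be integral partitions such that $\lambda$ stably embeds into $\mu$. Then $\|\lambda\|_p\le\|\mu\|_p$ for all $p\in[1,\infty]$ (equivalently, by Kuperberg's characterization, $\lambda$ bulk-embeds into $\mu$).
   Context: An integral partition is a finite nonincreasing sequence of positive integers. For $p\in[1,\infty)$, $\|\lambda\|_p=(\sum_i\lambda_i^p)^{1/p}$ and $\|\lambda\|_\infty=\max_i\lambda_i$. The product $\lambda\times\nu$ is the partition of all products $\lambda_i\nu_j$, reordered nonincreasingly. $\lambda=[\lambda_1,\ldots,\lambda_m]$ embeds into $\mu=[\mu_1,\ldots,\mu_n]$ if there is a map $\varphi:\{1,\ldots,m\}\to\{1,\ldots,n\}$ with $\sum_{i\in\varphi^{-1}(j)}\lambda_i\le\mu_j$ for all $j$. $\lambda$ stably embeds into $\mu$ if there is an integral partition $\nu$ such that $\lambda\times\nu$ embeds into $\mu\times\nu$. $\lambda$ bulk-embeds into $\mu$ if for every rational $\epsilon>0$ there exists $N$ with $\lambda^{\times N}$ embedding into $\mu^{\times N(1+\epsilon)}$; Kuperberg showed this holds iff $\|\lambda\|_p\le\|\mu\|_p$ for all $p\in[1,\infty]$. *)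

From mathcomp Require Import all_boot all_order all_algebra.
From mathcomp Require Import all_classical all_reals all_analysis.
Set Implicit Arguments. Unset Strict Implicit. Unset Printing Implicit Defensive.
Import Order.TTheory GRing.Theory Num.Theory.

Definition is_partition (l : seq nat) : bool :=
  all (fun x => 0 < x)%N l && sorted geq l.

Definition part_prod (l n : seq nat) : seq nat :=
  sort geq [seq (x * y)%N | x <- l, y <- n].

Definition embeds (l m : seq nat) : Prop :=
  exists phi : 'I_(size l) -> 'I_(size m),
    forall j : 'I_(size m),
      (\sum_(i < size l | phi i == j) nth 0%N l i <= nth 0%N m j)%N.

(* Stable embedding; the auxiliary partition nu is required to be nonempty
   (otherwise every l would stably embed into every m via the empty product). *)
Definition stably_embeds (l m : seq nat) : Prop :=
  exists nu : seq nat, [/\ is_partition nu, nu != [::] &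
                           embeds (part_prod l nu) (part_prod m nu)].

Local Open Scope ring_scope.

Definition pnorm (R : realType) (p : R) (l : seq nat) : R :=
  powR (\sum_(x <- l) powR (x%:R) p) p^-1.

(* infinity-norm (max part; 0 for the empty partition). *)
Definition infnorm (l : seq nat) : nat := (\max_(x <- l) x)%N.

From mathcomp Require Import all_boot all_order all_algebra.
From mathcomp Require Import all_classical all_reals all_analysis.
Import Order.TTheory GRing.Theory Num.Theory.
Local Open Scope ring_scope.

(* If f : nat -> R is monotone and superadditive with f 0 = 0, an embedding
   of a into b gives sum f(a) <= sum f(b), block by block; x |-> x^p with
   p >= 1 is such an f, and an embedding likewise cannot increase the largest
   part.  Both the power sum and the maximum turn the partition product into
   a product: sum_p(l * nu) = sum_p(l) sum_p(nu), max(l * nu) = max(l) max(nu).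
   As nu is a nonempty partition, its factor is positive and cancels. *)

Lemma big_part_prod (R : Type) (zero : R) (times : Monoid.mul_law zero)
    (plus : Monoid.add_law zero times) (g : nat -> R) (a b : seq nat) :
  {morph g : x y / (x * y)%N >-> times x y} ->
  \big[plus/zero]_(z <- part_prod a b) g z =
    times (\big[plus/zero]_(x <- a) g x) (\big[plus/zero]_(y <- b) g y).
Proof.
move=> gM; rewrite (perm_big _ (permEl (perm_sort _ _))) big_allpairs_dep.
rewrite big_distrl; apply: eq_bigr => x _.
by rewrite big_distrr; apply: eq_bigr => y _; rewrite gM.
Qed.

Lemma infnorm_part_prod (l n : seq nat) :
  infnorm (part_prod l n) = (infnorm l * infnorm n)%N.
Proof. exact: (@big_part_prod _ _ _ maxn id). Qed.

Lemma embeds_infnorm (a b : seq nat) : embeds a b -> (infnorm a <= infnorm b)%N.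
Proof.
move=> [phi le_phi]; apply/bigmax_leqP_seq => x xa _.
have ia : (index x a < size a)%N by rewrite index_mem.
pose i := Ordinal ia.
have x_le_bi : (x <= nth 0%N b (phi i))%N.
  apply: leq_trans (le_phi (phi i)).
  by rewrite (bigD1 i) //= nth_index // leq_addr.
apply: leq_trans x_le_bi _; apply: leq_bigmax_seq => //; exact: mem_nth.
Qed.

Lemma embeds_sum_le (R : numDomainType) (f : nat -> R) (a b : seq nat) :
  f 0%N = 0 -> {homo f : x y / (x <= y)%N >-> x <= y} ->
  (forall x y, f x + f y <= f (x + y)%N) ->
  embeds a b -> \sum_(x <- a) f x <= \sum_(y <- b) f y.
Proof.
move=> f0 f_homo f_superadd [phi le_phi].
rewrite (big_nth 0%N) big_mkord [leRHS](big_nth 0%N) big_mkord.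
rewrite (partition_big phi xpredT) //=; apply: ler_sum => j _.
apply: le_trans (f_homo _ _ (le_phi j)).
apply: (big_ind2 (fun r n => r <= f n)) => [|r1 n1 r2 n2 le1 le2|//].
  by rewrite f0.
by apply: le_trans (f_superadd _ _); apply: lerD.
Qed.

Lemma lerD_powR (R : realType) (p x y : R) : 1 <= p -> 0 <= x -> 0 <= y ->
  x `^ p + y `^ p <= (x + y) `^ p.
Proof.
move=> p1 x0 y0; have p0 : 0 < p by apply: lt_le_trans p1.
have xy0 : 0 <= x + y by rewrite addr_ge0.
rewrite -(mulr_powRB1 x0 p0) -(mulr_powRB1 y0 p0) -(mulr_powRB1 xy0 p0) mulrDl.
have p1_ge0 : 0 <= p - 1 by rewrite subr_ge0.
by apply: lerD; apply: ler_wpM2l => //; apply: ge0_ler_powR;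
  rewrite ?nnegrE ?lerDl ?lerDr.
Qed.

Section PowerSums.

Variables (R : realType) (p : R).
Hypothesis p_ge1 : 1 <= p.

Let p_gt0 : 0 < p. Proof. exact: lt_le_trans p_ge1. Qed.

Let psum (l : seq nat) : R := \sum_(x <- l) x%:R `^ p.

Let psum_ge0 l : 0 <= psum l.
Proof. by apply: sumr_ge0 => x _; apply: powR_ge0. Qed.

Lemma psum_embeds (a b : seq nat) : embeds a b -> psum a <= psum b.
Proof.
apply: embeds_sum_le => [|x y le_xy|x y] /=; first by rewrite powR0 ?gt_eqF.
- by apply: ge0_ler_powR; rewrite ?nnegrE ?ler_nat // ltW.
- by rewrite natrD; apply: lerD_powR.
Qed.

Lemma psum_part_prod (l n : seq nat) : psum (part_prod l n) = psum l * psum n.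
Proof. by apply: big_part_prod => x y; rewrite /= natrM powRM. Qed.

Lemma psum_partition_gt0 (n : seq nat) :
  is_partition n -> n != [::] -> 0 < psum n.
Proof.
case: n => [//|y t] /andP[/= /andP[y_gt0 _] _] _.
rewrite /psum big_cons ltr_wpDr //; first exact: psum_ge0.
by apply: powR_gt0; rewrite ltr0n.
Qed.

Lemma stably_embeds_pnorm (l m : seq nat) :
  stably_embeds l m -> pnorm p l <= pnorm p m.
Proof.
move=> [n [n_part n_nil /psum_embeds]].
rewrite !psum_part_prod ler_pM2r ?psum_partition_gt0 // => le_psum.
apply: ge0_ler_powR => //; first by rewrite invr_ge0 ltW.
all: exact: psum_ge0.
Qed.

End PowerSums.

Lemma stably_embeds_infnorm (l m : seq nat) :
  stably_embeds l m -> (infnorm l <= infnorm m)%N.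
Proof.
move=> [n [+ + /embeds_infnorm]].
case: n => [//|y t] /andP[/= /andP[y_gt0 _] _] _.
rewrite !infnorm_part_prod leq_pmul2r //.
by apply: leq_trans y_gt0 _; apply: leq_bigmax_seq; rewrite ?mem_head.
Qed.

Theorem mainTheorem4 (R : realType) (l m : seq nat) :
  is_partition l -> is_partition m -> stably_embeds l m ->
  (forall p : R, 1 <= p -> pnorm p l <= pnorm p m) /\ (infnorm l <= infnorm m)%N.
Proof.
move=> _ _ l_m; split; last exact: stably_embeds_infnorm.
by move=> p p_ge1; apply: stably_embeds_pnorm.
Qed.
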